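(* Let $a_1,\dots,a_d$ be positive integers with $\gcd(a_1,\dots,a_d)=1$ and let $N$ be a positive integer. Let $\mathcal M$ be a maximal element (for inclusion) of $\mathfrak M$ with $0\in\mathcal M$, and let $i\in\{0,\dots,N-1\}$. Then $\mathcal M$ contains an element congruent to $i$ modulo $N$.
   Context: $\mathcal S_+=\{N+\sum_ic_ia_i: c_i\in\mathbb Z_{\ge0}\}$, $\mathcal S_-=-\mathcal S_+$, $\mathcal S=\mathcal S_+\cup\mathcal S_-$, and $\mathfrak M=\{\mathcal M\subset\mathbb Z:\ m,m'\in\mathcal M\Rightarrow m-m'\notin\mathcal S\}$, partially ordered by inclusion. *)

From Stdlib Require Import ZArith.
Open Scope Z_scope.

Fixpoint zsum (n : nat) (f : nat -> Z) : Z :=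
  match n with O => 0 | S k => zsum k f + f k end.

Fixpoint zgcd (n : nat) (a : nat -> Z) : Z :=
  match n with O => 0 | S k => Z.gcd (zgcd k a) (a k) end.

(* The generators a_1..a_d are a 0, ..., a (d-1). *)
Definition S_plus (N : Z) (d : nat) (a : nat -> Z) (x : Z) : Prop :=
  exists c : nat -> Z, (forall i, (i < d)%nat -> 0 <= c i) /\
    x = N + zsum d (fun i => c i * a i).

Definition S_minus (N : Z) (d : nat) (a : nat -> Z) (x : Z) : Prop :=
  S_plus N d a (- x).

Definition S_set (N : Z) (d : nat) (a : nat -> Z) (x : Z) : Prop :=
  S_plus N d a x \/ S_minus N d a x.

Definition in_frakM (N : Z) (d : nat) (a : nat -> Z) (M : Z -> Prop) : Prop :=
  forall m m', M m -> M m' -> ~ S_set N d a (m - m').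

Definition maximal_frakM (N : Z) (d : nat) (a : nat -> Z) (M : Z -> Prop) : Prop :=
  in_frakM N d a M /\
  forall M' : Z -> Prop, in_frakM N d a M' -> (forall x, M x -> M' x) ->
    forall x, M' x -> M x.

(* Let G be the additive monoid generated by the a_j, so S_+ = N + G, and say that x is
   dominated by M when m - x lies in S_+ for some m in M.  Fix z in G with z = i (mod N),
   which exists since gcd(a) = 1.  On the progression x0 + tN with x0 = -N - (N-1)z (also
   = i mod N) the point x0 is dominated by 0 in M, while x0 + (z+1)N = z is not, since then
   0 would not be compatible with its dominator.  At the first undominated point y of the
   progression, M + {y} still lies in frak M: y is not dominated, and y - m in S_+ would
   make m incompatible with the dominator of y - N.  Maximality then puts y in M. *)
From Stdlib Require Import ZArith Znumtheory Lia Classical.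
Open Scope Z_scope.

Lemma zsum_ext n f g :
  (forall j, (j < n)%nat -> f j = g j) -> zsum n f = zsum n g.
Proof.
  induction n as [|n IH]; simpl; intros Hfg; [reflexivity|].
  rewrite IH, Hfg by (intros; apply Hfg || idtac; lia); reflexivity.
Qed.

Lemma zsum_add n f g : zsum n (fun j => f j + g j) = zsum n f + zsum n g.
Proof. induction n; simpl; lia. Qed.

Lemma zsum_mull n k f : zsum n (fun j => k * f j) = k * zsum n f.
Proof. induction n; simpl; lia. Qed.

Lemma zsum_ge0 n f : (forall j, (j < n)%nat -> 0 <= f j) -> 0 <= zsum n f.
Proof.
  induction n as [|n IH]; simpl; intros Hf; [lia|].
  specialize (Hf n ltac:(lia)) as Hn.
  enough (0 <= zsum n f) by lia.
  apply IH; intros; apply Hf; lia.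
Qed.

Lemma zsum_mod_compat N n f g :
  (forall j, (j < n)%nat -> f j mod N = g j mod N) -> zsum n f mod N = zsum n g mod N.
Proof.
  induction n as [|n IH]; simpl; intros Hfg; [reflexivity|].
  rewrite Zplus_mod, (Zplus_mod (zsum n g)), IH, Hfg by (intros; apply Hfg || idtac; lia).
  reflexivity.
Qed.

Lemma zgcd_bezout n (a : nat -> Z) :
  exists u : nat -> Z, zsum n (fun j => u j * a j) = zgcd n a.
Proof.
  induction n as [|n [u Hu]]; [exists (fun _ => 0); reflexivity|]; simpl.
  destruct (Zis_gcd_bezout _ _ _ (Zgcd_is_gcd (zgcd n a) (a n))) as [p q Hpq].
  exists (fun j => if Nat.ltb j n then p * u j else q).
  rewrite Nat.ltb_irrefl, (zsum_ext n _ (fun j => p * (u j * a j))).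
  - rewrite zsum_mull, Hu; lia.
  - intros j Hj; apply Nat.ltb_lt in Hj; rewrite Hj; ring.
Qed.

Definition nonneg_comb (d : nat) (a : nat -> Z) (x : Z) : Prop :=
  exists c : nat -> Z, (forall j, (j < d)%nat -> 0 <= c j) /\
    x = zsum d (fun j => c j * a j).

Section NonnegComb.

Variables (d : nat) (a : nat -> Z).

Lemma nonneg_comb_ge0 x :
  (forall j, (j < d)%nat -> 0 < a j) -> nonneg_comb d a x -> 0 <= x.
Proof.
  intros Ha [c [Hc ->]]; apply zsum_ge0; intros j Hj.
  specialize (Ha j Hj); specialize (Hc j Hj); nia.
Qed.

Lemma nonneg_comb_add x y :
  nonneg_comb d a x -> nonneg_comb d a y -> nonneg_comb d a (x + y).
Proof.
  intros [c [Hc ->]] [e [He ->]]; exists (fun j => c j + e j); split.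
  - intros j Hj; specialize (Hc j Hj); specialize (He j Hj); lia.
  - rewrite <- zsum_add; apply zsum_ext; intros; ring.
Qed.

Lemma nonneg_comb_mull k x :
  0 <= k -> nonneg_comb d a x -> nonneg_comb d a (k * x).
Proof.
  intros Hk [c [Hc ->]]; exists (fun j => k * c j); split.
  - intros j Hj; specialize (Hc j Hj); nia.
  - rewrite <- zsum_mull; apply zsum_ext; intros; ring.
Qed.

(* Reduce Bezout coefficients mod N to make them nonnegative. *)
Lemma nonneg_comb_mod N r :
  0 < N -> zgcd d a = 1 -> exists x, nonneg_comb d a x /\ x mod N = r mod N.
Proof.
  intros HN Hg; destruct (zgcd_bezout d a) as [u Hu]; rewrite Hg in Hu.
  set (w := zsum d (fun j => u j mod N * a j)).
  assert (Hw : w mod N = 1 mod N).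
  { rewrite <- Hu; apply zsum_mod_compat; intros j _.
    rewrite Zmult_mod, Zmod_mod, <- Zmult_mod; reflexivity. }
  exists (r mod N * w); split.
  - apply nonneg_comb_mull; [apply Z.mod_pos_bound; lia|].
    exists (fun j => u j mod N); split; [|reflexivity].
    intros j _; apply Z.mod_pos_bound; lia.
  - rewrite Zmult_mod, Hw, <- Zmult_mod, Z.mul_1_r; apply Zmod_mod.
Qed.

End NonnegComb.

Section FrakM.

Variables (N : Z) (d : nat) (a : nat -> Z).
Hypothesis ha_pos : forall j, (j < d)%nat -> 0 < a j.
Hypothesis hN : 0 < N.

Lemma S_plus_comb x : S_plus N d a x <-> nonneg_comb d a (x - N).
Proof. split; intros [c [Hc Hx]]; exists c; split; auto; lia. Qed.

Lemma S_plus_add_comb x y :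
  S_plus N d a x -> nonneg_comb d a y -> S_plus N d a (x + y).
Proof.
  rewrite !S_plus_comb; intros Hx Hy.
  replace (x + y - N) with (x - N + y) by ring; apply nonneg_comb_add; assumption.
Qed.

Lemma S_set_0 : ~ S_set N d a 0.
Proof.
  intros [H | H]; unfold S_minus in H; apply S_plus_comb, nonneg_comb_ge0 in H;
    auto; lia.
Qed.

Lemma maximal_frakM_mem M y :
  maximal_frakM N d a M ->
  (forall m, M m -> ~ S_plus N d a (y - m) /\ ~ S_plus N d a (m - y)) -> M y.
Proof.
  intros [HM Hmax] Hy.
  apply (Hmax (fun w => M w \/ w = y)); [| now left | now right].
  assert (Hopp : forall m, M m -> ~ S_set N d a (y - m) /\ ~ S_set N d a (m - y)).
  { intros m Hm; destruct (Hy m Hm) as [Hl Hr]; unfold S_set, S_minus.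
    replace (- (y - m)) with (m - y) by ring; replace (- (m - y)) with (y - m) by ring.
    tauto. }
  intros u v [Hu | ->] [Hv | ->].
  - now apply HM.
  - apply Hopp, Hu.
  - apply Hopp, Hv.
  - rewrite Z.sub_diag; exact S_set_0.
Qed.

End FrakM.

Lemma last_true_before_false (P : Z -> Prop) n :
  0 <= n -> P 0 -> ~ P n -> exists t, P t /\ ~ P (t + 1).
Proof.
  intros Hn H0; revert n Hn; apply (natlike_ind (fun n => ~ P n -> _)); [contradiction|].
  intros k _ IH Hk1.
  destruct (classic (P k)) as [Hk | Hk]; [now exists k | now apply IH].
Qed.

Theorem mainTheorem15 (d : nat) (a : nat -> Z) (N : Z) (M : Z -> Prop)
  (ha_pos : forall j, (j < d)%nat -> 0 < a j)
  (ha_gcd : zgcd d a = 1)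
  (hN : 0 < N)
  (hM : maximal_frakM N d a M)
  (h0 : M 0)
  (i : Z) (hi : 0 <= i < N) :
  exists m, M m /\ m mod N = i.
Proof.
  destruct (nonneg_comb_mod d a N i hN ha_gcd) as [z [Hz Hzi]].
  set (x0 := - N - (N - 1) * z).
  set (dominated := fun t => exists m, M m /\ S_plus N d a (m - (x0 + t * N))).
  assert (Hstart : dominated 0).
  { exists 0; split; [exact h0|]; apply S_plus_comb.
    replace (0 - (x0 + 0 * N) - N) with ((N - 1) * z) by (unfold x0; ring).
    apply nonneg_comb_mull; [lia | exact Hz]. }
  assert (Hend : ~ dominated (z + 1)).
  { intros [m [Hm Hdom]]; apply (proj1 hM m 0 Hm h0); left.
    replace (m - 0) with (m - (x0 + (z + 1) * N) + z) by (unfold x0; ring).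
    apply S_plus_add_comb; assumption. }
  pose proof (nonneg_comb_ge0 d a z ha_pos Hz) as Hz0.
  destruct (last_true_before_false dominated (z + 1)) as [t [[m0 [Hm0 Hdom0]] Hfree]];
    [lia | exact Hstart | exact Hend |].
  exists (x0 + (t + 1) * N); split.
  - apply (maximal_frakM_mem N d a ha_pos hN M _ hM); intros m Hm; split.
    + intros HS; apply (proj1 hM m0 m Hm0 Hm); left.
      apply S_plus_comb in HS.
      replace (m0 - m) with (m0 - (x0 + t * N) + (x0 + (t + 1) * N - m - N)) by ring.
      apply S_plus_add_comb; assumption.
    + intros HS; apply Hfree; now exists m.
  - replace (x0 + (t + 1) * N) with (z + (t - z) * N) by (unfold x0; ring).
    rewrite Z.mod_add, Hzi by lia; apply Z.mod_small; exact hi.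
Qed.
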